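(* Let $n\geq 4$ and $l=2^{n-2}-1$. Let $\Lambda$ be an $\mathcal{O}$-order with split semisimple $K$-span whose decomposition matrix is $D_0$; let $V_1,\dots,V_{6+l}$ be the simple $K\otimes\Lambda$-modules indexed according to the rows of $D_0$, and $P_1,P_2,P_3$ the projective indecomposable $\Lambda$-modules indexed according to the columns of $D_0$. Let $\varphi$ be an isometry of $K_0(K\otimes\Lambda)$ mapping the lattice $L=\langle [K\otimes P]\mid P \text{ a projective }\Lambda\text{-module}\rangle_{\mathbb Z}$ onto itself. Then $\varphi$ is a signed permutation of $\{[V_1],\dots,[V_{6+l}]\}$ lying in $$\langle \pm\mathrm{id},\ (2,3)(5,6),\ (-1,-4)(2,3)(-5)(-6),\ (2,4)(-1,-3)(-6)\rangle\cdot\mathrm{Sym}(\{7,\dots,6+l\}).$$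
   Context: $\mathcal{O}$ is a complete discrete valuation ring of characteristic $0$ with fraction field $K$ and algebraically closed residue field $k$ of characteristic $2$. $D_0$ is the $(6+l)\times3$ matrix with rows, in order, $(1,0,0),(0,1,0),(0,0,1),(1,1,1),(1,1,0),(1,0,1)$ followed by $l$ rows $(0,1,1)$; ''decomposition matrix $D_0$'' means the multiplicity of the $j$-th simple $k\otimes\Lambda$-module in the reduction of a full lattice in $V_i$ is $(D_0)_{ij}$, equivalently $[K\otimes P_j]=\sum_i (D_0)_{ij}[V_i]$. $K_0(K\otimes\Lambda)$ is the Grothendieck group, with the bilinear form for which $[V_1],\dots,[V_{6+l}]$ is an orthonormal basis. Signed permutation notation: a signed cycle $(i_1,\dots,i_k)$ with $i_j\in\pm\{1,\dots,6+l\}$ sends $[V_{|i_j|}]$ to $\operatorname{sgn}(i_{j+1})[V_{|i_{j+1}|}]$ (indices mod $k$), and fixes all $[V_m]$ with $m$ not occurring; e.g. $(-5)$ sends $[V_5]\mapsto-[V_5]$. $\mathrm{Sym}(\{7,\dots,6+l\})$ acts by permuting $[V_7],\dots,[V_{6+l}]$ without signs. *)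

From HB Require Import structures.
From mathcomp Require Import all_boot all_order all_algebra all_fingroup.
Set Implicit Arguments. Unset Strict Implicit. Unset Printing Implicit Defensive.
Import GRing.Theory.
Local Open Scope ring_scope.

(* Indices are 0-based: [V_i] is the basis vector e_(i-1) of Z^(l+6),
   i.e. K_0(K ⊗ Λ) = Z^(l+6) with the standard (orthonormal) form.
   Column-vector convention: the Z-linear map phi is v |-> M *m v. *)

Definition d0 (i j : nat) : int :=
  match i, j with
  | 0, 0 => 1 | 0, _ => 0
  | 1, 1 => 1 | 1, _ => 0
  | 2, 2 => 1 | 2, _ => 0
  | 3, _ => 1
  | 4, 2 => 0 | 4, _ => 1
  | 5, 1 => 0 | 5, _ => 1
  | _, 0 => 0 | _, _ => 1
  end.

Definition D0 (l : nat) : 'M[int]_(6 + l, 3) := \matrix_(i, j) d0 i j.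

(* v lies in L = Z-span of the [K ⊗ P_j] = columns of D0 *)
Definition inL (l : nat) (v : 'cV[int]_(6 + l)) : Prop :=
  exists c : 'cV[int]_3, v = D0 l *m c.

Definition maps_L_onto_L (l : nat) (M : 'M[int]_(6 + l)) : Prop :=
  (forall v, inL v -> inL (M *m v)) /\ (forall w, inL w -> exists v, inL v /\ M *m v = w).

Definition spmx (l : nat) (f : nat -> nat) (s : nat -> int) : 'M[int]_(6 + l) :=
  \matrix_(i, j) (if (i : nat) == f j then s j else 0).

Definition g1 (l : nat) : 'M[int]_(6 + l) :=
  spmx l (fun j => match j with 1 => 2 | 2 => 1 | 4 => 5 | 5 => 4 | k => k end)%N
         (fun _ => 1).
Definition g2 (l : nat) : 'M[int]_(6 + l) :=
  spmx l (fun j => match j with 0 => 3 | 3 => 0 | 1 => 2 | 2 => 1 | k => k end)%N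
         (fun j => match j with 0 | 3 | 4 | 5 => -1 | _ => 1 end).
Definition g3 (l : nat) : 'M[int]_(6 + l) :=
  spmx l (fun j => match j with 1 => 3 | 3 => 1 | 0 => 2 | 2 => 0 | k => k end)%N
         (fun j => match j with 0 | 2 | 5 => -1 | _ => 1 end).

Definition is_generator (l : nat) (g : 'M[int]_(6 + l)) : Prop :=
  g = - 1%:M \/ g = g1 l \/ g = g2 l \/ g = g3 l.

Inductive in_gen_group (l : nat) : 'M[int]_(6 + l) -> Prop :=
| gen_one : in_gen_group 1%:M
| gen_mul : forall g A, is_generator g -> in_gen_group A -> in_gen_group (g *m A)
| gen_mulinv : forall g A, is_generator g -> in_gen_group A ->
    in_gen_group (invmx g *m A).

Definition in_allowed_group (l : nat) (M : 'M[int]_(6 + l)) : Prop :=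
  exists (A : 'M[int]_(6 + l)) (s : 'S_(6 + l)),
    in_gen_group A /\ (forall i : 'I_(6 + l), (i < 6)%N -> s i = i) /\
    M = A *m perm_mx s.

From mathcomp Require Import all_boot all_order all_algebra all_fingroup.
From mathcomp Require Import zify.
Set Implicit Arguments. Unset Strict Implicit. Unset Printing Implicit Defensive.
Import GRing.Theory Num.Theory.
Local Open Scope ring_scope.
Arguments d0 (_ _)%_nat_scope.

(* An integral isometry is a signed permutation matrix M.  Since M maps
   L = D0 Z^3 into itself, M D0 = D0 X for some X, and as rows 0, 1, 2 of D0
   are the unit vectors, every row of M D0 is the D0-combination of its first
   three rows.  The rows of D0 are pairwise distinct up to sign except for the
   l >= 2 equal tail rows (0,1,1), so M permutes the tail with a common sign and
   hence also permutes the first six coordinates.  What remains is a finite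
   problem: among the 720 * 2^7 signed permutations of the first six coordinates
   with a tail sign, exactly sixteen satisfy the linear relations, and each is
   a word of length at most three in the generators. *)

Section MonomialMatrices.

Variable R : pzSemiRingType.

Definition monomial_mx m n (g : 'I_m -> 'I_n) (t : 'I_m -> R) : 'M[R]_(m, n) :=
  \matrix_(i, j) if j == g i then t i else 0.

Lemma mul_monomial_mx m n p g t (B : 'M[R]_(n, p)) i j :
  (@monomial_mx m n g t *m B) i j = t i * B (g i) j.
Proof.
rewrite mxE (bigD1 (g i)) //= big1 ?addr0 => [|k /negbTE gik]; rewrite mxE.
  by rewrite eqxx.
by rewrite gik mul0r.
Qed.

Lemma monomial_mxM m n p g t (g' : 'I_n -> 'I_p) t' :
  @monomial_mx m n g t *m monomial_mx g' t' =
  monomial_mx (g' \o g) (fun i => t i * t' (g i)).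
Proof.
by apply/matrixP => i j; rewrite mul_monomial_mx !mxE /=; case: eqP; rewrite ?mulr0.
Qed.

Lemma eq_monomial_mx m n (g g' : 'I_m -> 'I_n) t t' :
  g =1 g' -> t =1 t' -> monomial_mx g t = monomial_mx g' t'.
Proof. by move=> eg et; apply/matrixP => i j; rewrite !mxE eg et. Qed.

Lemma perm_mx_monomial n (s : 'S_n) : perm_mx s = monomial_mx s (fun _ => 1).
Proof. by apply/matrixP => i j; rewrite !mxE eq_sym; case: eqP. Qed.

End MonomialMatrices.

Definition signs : seq int := [:: 1; -1].

Lemma int_orthogonal_row N (Q : 'M[int]_N) i : Q *m Q^T = 1%:M ->
  exists j, Q i j \in signs /\ forall j', j' != j -> Q i j' = 0.
Proof.
move=> QQt.
have sum_sq : \sum_j Q i j ^+ 2 = 1.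
  have := congr1 (fun A : 'M[int]_N => A i i) QQt; rewrite !mxE eqxx mulr1n => <-.
  by apply: eq_bigr => j _; rewrite mxE expr2.
have [j nz_j | row0] := pickP (fun j => Q i j != 0); last first.
  move: sum_sq; rewrite big1 // => j _.
  by move/negbFE/eqP: (row0 j) => ->; rewrite expr2 mulr0.
exists j; rewrite (bigD1 j) //= in sum_sq.
set rest := \sum_(j' | j' != j) _ in sum_sq.
have rest_ge0 : 0 <= rest by apply: sumr_ge0 => k _; apply: sqr_ge0.
have sq_ge1 : 1 <= Q i j ^+ 2.
  by move: nz_j; rewrite expr2; move: (Q i j) => x; lia.
have [sq_j rest0] : Q i j ^+ 2 = 1 /\ rest = 0 by lia.
split; first by rewrite !inE -sqrf_eq1 sq_j.
move=> j' j'j; have := psumr_eq0P (fun k _ => sqr_ge0 (Q i k)) rest0 j'j.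
by move/eqP; rewrite sqrf_eq0 => /eqP.
Qed.

Lemma int_orthogonal_monomial N (Q : 'M[int]_N) : Q^T *m Q = 1%:M ->
  exists g t, [/\ injective g, forall i, t i \in signs & Q = monomial_mx g t].
Proof.
move=> QtQ.
have [g row_g] := fin_all_exists (fun i => int_orthogonal_row i (mulmx1C QtQ)).
have col_unit j := int_orthogonal_row j (etrans (congr1 _ (trmxK Q)) QtQ).
exists g, (fun i => Q i (g i)); split => [i i' gii'| i | ]; last 2 first.
- exact: (row_g i).1.
- apply/matrixP => i j; rewrite mxE.
  by case: eqP => [-> //|/eqP]; apply: (row_g i).2.
have [k [_ col0]] := col_unit (g i).
have row_k x : Q x (g i) != 0 -> x = k.
  move=> nz; apply/eqP; apply: contraLR nz => /col0; rewrite mxE => ->.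
  by rewrite negbK.
have nz x : Q x (g x) != 0 by move: (row_g x).1; rewrite !inE => /orP [] /eqP ->.
by rewrite (row_k i (nz i)) (row_k i') // gii'.
Qed.

Lemma col_span_stable_intertwined (R : pzSemiRingType) m n (D : 'M[R]_(m, n))
    (A : 'M[R]_m) :
  (forall v : 'cV_m, (exists c : 'cV_n, v = D *m c) -> exists c, A *m v = D *m c) ->
  exists X, A *m D = D *m X.
Proof.
move=> stable.
have [x Ax] := fin_all_exists (fun j => stable (D *m delta_mx j 0) (ex_intro _ _ erefl)).
exists (\matrix_(k, j) x j k 0); apply/matrixP => i j.
have := congr1 (fun B : 'cV_m => B i 0) (Ax j); rewrite mulmxA -colE !mxE => ->.
by apply: eq_bigr => k _; rewrite mxE.
Qed.

Lemma d0_tail a c : (6 <= a)%N -> d0 a c = d0 6 c.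
Proof. by do 6 (case: a => [|a] //). Qed.

Lemma D0_intertwined_rows l (A : 'M[int]_(6 + l)) X :
  A *m D0 l = D0 l *m X ->
  forall i c, (A *m D0 l) i c = \sum_(k < 3) d0 i k * (A *m D0 l) (inord k) c.
Proof.
move=> AD i c; rewrite AD mxE; apply: eq_bigr => k _; rewrite mxE; congr (_ * _).
rewrite mxE !big_ord_recl big_ord0 !mxE inordK; last by case: k => [[|[|[|k]]] hk].
case: k => [[|[|[|k]]] hk] //=; rewrite !mul0r !mul1r ?addr0 ?add0r;
  by congr (X _ c); apply: val_inj.
Qed.

Lemma d0_minn a c : d0 a c = d0 (minn a 6)%N c.
Proof.
case: (leqP 6 a) => ha; last by congr d0; lia.
by rewrite (d0_tail _ ha); congr d0; lia.
Qed.

Lemma d0_signed_row_eq a b (ta tb : int) : ta \in signs -> tb \in signs ->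
  (forall c : 'I_3, ta * d0 a c = tb * d0 b c) -> (minn a 6 = minn b 6)%N /\ ta = tb.
Proof.
move=> ta_s tb_s eq_rows.
have rows_distinct : all (fun a => all (fun b => all (fun ta => all (fun tb =>
    [&& ta * d0 a 0 == tb * d0 b 0, ta * d0 a 1 == tb * d0 b 1
      & ta * d0 a 2 == tb * d0 b 2] ==> (a == b) && (ta == tb))
    signs) signs) (iota 0 7)) (iota 0 7) by [].
have mem_clamp x : (minn x 6)%N \in iota 0 7 by rewrite mem_iota; lia.
move: rows_distinct => /allP/(_ _ (mem_clamp a))/allP/(_ _ (mem_clamp b)).
move=> /allP/(_ _ ta_s)/allP/(_ _ tb_s); rewrite -!d0_minn.
have := eq_rows ord0; have := eq_rows (inord 1); have := eq_rows (inord 2).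
by rewrite !inordK //= => -> -> ->; rewrite !eqxx /= => /andP [/eqP -> /eqP ->].
Qed.

Lemma inj_ord_below N (g : 'I_N -> 'I_N) k : injective g ->
  (forall i : 'I_N, k <= i -> k <= g i)%N -> forall i : 'I_N, (i < k -> g i < k)%N.
Proof.
move=> g_inj g_above; set T := [set i : 'I_N | (k <= i)%N].
have gT_sub : g @: T \subset T.
  by apply/subsetP => x /imsetP [y]; rewrite !inE => hy ->; exact: g_above.
have gT : g @: T = T by apply/eqP; rewrite eqEcard gT_sub (card_imset _ g_inj) /=.
move=> i hi; rewrite ltnNge; apply/negP => hgi.
have : g i \in g @: T by rewrite gT inE.
case/imsetP => i' hi' /g_inj e.
by move: hi'; rewrite inE -e leqNgt hi.
Qed.

Lemma D0_tail_preserved l (g : 'I_(6 + l) -> 'I_(6 + l)) t : (2 <= l)%N ->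
  injective g -> (forall i, t i \in signs) ->
  (forall i j : 'I_(6 + l), (6 <= i)%N -> (6 <= j)%N ->
     forall c : 'I_3, t i * d0 (g i) c = t j * d0 (g j) c) ->
  forall i : 'I_(6 + l), (6 <= i)%N -> (6 <= g i)%N /\ t i = t (inord 6).
Proof.
move=> l_ge2 g_inj t_sign tail_rows.
have tail_pair (i j : 'I_(6 + l)) : (6 <= i)%N -> (6 <= j)%N -> i != j -> (6 <= g i)%N /\ t i = t j.
  move=> hi hj ij.
  have [minn_eq ->] := d0_signed_row_eq (t_sign i) (t_sign j) (tail_rows i j hi hj).
  split=> //; apply: contraNT ij; rewrite -ltnNge => gi_lt6.
  by apply/eqP/g_inj/val_inj => /=; lia.
have o6E : (inord 6 : 'I_(6 + l)) = 6%N :> nat by rewrite inordK; lia.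
have o7E : (inord 7 : 'I_(6 + l)) = 7%N :> nat by rewrite inordK; lia.
have o6_tail : (6 <= (inord 6 : 'I_(6 + l)))%N by rewrite o6E.
have o7_tail : (6 <= (inord 7 : 'I_(6 + l)))%N by rewrite o7E.
have o6_o7 : (inord 6 : 'I_(6 + l)) != inord 7 by rewrite -val_eqE /= o6E o7E.
move=> i hi; have [->|ne] := eqVneq i (inord 6); last exact: tail_pair.
by have [] := tail_pair _ _ o6_tail o7_tail o6_o7.
Qed.

(* A signed permutation of the basis that permutes the first six basis vectors
   and multiplies the tail by a common sign is encoded by [(a, s)]: [a] lists
   the images of 0..5 and [s] the signs of 0..5 followed by the tail sign. *)
Definition hperm := (seq nat * seq int)%type.

Definition hperm_idx (h : hperm) i := if (i < 6)%N then nth 0%N h.1 i else i.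

Definition hperm_sgn (h : hperm) i := nth 0 h.2 (minn i 6).

Definition hperm_mx l (h : hperm) : 'M[int]_(6 + l) :=
  monomial_mx (fun i => inord (hperm_idx h i)) (fun i => hperm_sgn h i).

Definition hperm_valid (h : hperm) := (size h.1 == 6%N) && all (fun x => x < 6)%N h.1.

Definition hperm_mul (h h' : hperm) : hperm :=
  ([seq hperm_idx h' x | x <- h.1],
   [seq hperm_sgn h i * hperm_sgn h' (hperm_idx h i) | i <- iota 0 7]).

Lemma hperm_idx_lt l h (i : 'I_(6 + l)) : hperm_valid h -> (hperm_idx h i < 6 + l)%N.
Proof.
case/andP => /eqP size_h /allP lt6; rewrite /hperm_idx; case: ifP => hi //.
have /lt6 /= : nth 0%N h.1 i \in h.1 by rewrite mem_nth ?size_h.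
lia.
Qed.

Lemma hperm_idx_mul h h' i : hperm_valid h ->
  hperm_idx (hperm_mul h h') i = hperm_idx h' (hperm_idx h i).
Proof.
case/andP => /eqP size_h _; rewrite /hperm_idx /=; case: ifP => hi; last by rewrite hi.
by rewrite (nth_map 0%N) ?size_h.
Qed.

Lemma hperm_sgn_mul h h' i :
  hperm_sgn (hperm_mul h h') i = hperm_sgn h i * hperm_sgn h' (hperm_idx h i).
Proof.
rewrite {1}/hperm_sgn /hperm_mul (nth_map 0%N) ?size_iota ?nth_iota; try lia.
rewrite add0n; case: (ltnP i 6) => hi //.
have i6 : minn i 6 = 6%N by lia.
by rewrite /hperm_sgn /hperm_idx /= ltnNge hi /= i6.
Qed.

Lemma hperm_mxM l h h' : hperm_valid h ->
  hperm_mx l (hperm_mul h h') = hperm_mx l h *m hperm_mx l h'.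
Proof.
move=> h_valid; rewrite monomial_mxM; apply: eq_monomial_mx => i /=.
  by rewrite hperm_idx_mul // inordK // hperm_idx_lt.
by rewrite hperm_sgn_mul inordK // hperm_idx_lt.
Qed.

Lemma hperm_mx_scalar l (s : int) : hperm_mx l (iota 0 6, nseq 7 s) = s%:M.
Proof.
apply/matrixP => i j; rewrite !mxE /hperm_sgn /hperm_idx nth_nseq.
have -> : (minn i 6 < 7)%N by lia.
have -> : (if (i < 6)%N then nth 0%N (iota 0 6) i else i) = i.
  by case: ifP => hi //; rewrite nth_iota.
by rewrite inord_val eq_sym; case: eqP.
Qed.

Lemma spmx_hperm l f s h : involutive f -> hperm_valid h ->
  hperm_idx h =1 f -> hperm_sgn h =1 s \o f -> spmx l f s = hperm_mx l h.
Proof.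
move=> f_inv h_valid h_idx h_sgn; apply/matrixP => i j; rewrite !mxE h_sgn /=.
have -> : (j == inord (hperm_idx h i)) = ((i : nat) == f j).
  by rewrite -val_eqE /= inordK ?hperm_idx_lt // h_idx eq_sym inv_eq.
by case: eqP => // ->; rewrite f_inv.
Qed.

Definition neg_hperm : hperm := (iota 0 6, nseq 7 (-1)).
Definition g1_hperm : hperm := ([:: 0; 2; 1; 3; 5; 4]%N, nseq 7 1).
Definition g2_hperm : hperm := ([:: 3; 2; 1; 0; 4; 5]%N, [:: -1; 1; 1; -1; -1; -1; 1]).
Definition g3_hperm : hperm := ([:: 2; 3; 0; 1; 4; 5]%N, [:: -1; 1; -1; 1; 1; -1; 1]).
Definition gen_hperms := [:: neg_hperm; g1_hperm; g2_hperm; g3_hperm].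

Lemma gen_hperm_valid h : h \in gen_hperms -> hperm_valid h.
Proof. by rewrite !inE => /or4P [] /eqP ->. Qed.

Lemma gen_hperm_generator l h : h \in gen_hperms -> is_generator (hperm_mx l h).
Proof.
rewrite !inE => /or4P [] /eqP ->; [left | right; left | do 2 right; left | do 3 right].
  by rewrite hperm_mx_scalar raddfN.
all: by apply: esym; apply: spmx_hperm => //; case=> [|[|[|[|[|[|i]]]]]].
Qed.

Definition eval_word (w : seq hperm) : hperm := foldr hperm_mul (iota 0 6, nseq 7 1) w.

Lemma eval_word_gen_group l w : all (mem gen_hperms) w ->
  in_gen_group (hperm_mx l (eval_word w)).
Proof.
elim: w => [_|h w IHw /andP [h_gen w_gen]] /=.
  by rewrite hperm_mx_scalar; apply: gen_one.
rewrite hperm_mxM; last exact: gen_hperm_valid.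
exact: gen_mul (gen_hperm_generator l h_gen) (IHw w_gen).
Qed.

Fixpoint gen_words n : seq (seq hperm) :=
  if n is n'.+1 then [::] :: [seq h :: w | h <- gen_hperms, w <- gen_words n']
  else [:: [::]].

Lemma gen_words_gens n w : w \in gen_words n -> all (mem gen_hperms) w.
Proof.
elim: n w => [|n IHn] w; first by rewrite inE => /eqP ->.
rewrite inE => /predU1P [-> //|/allpairsP [[h w'] [/= h_gen /IHn w'_gen ->]]].
by rewrite /= h_gen.
Qed.

Fixpoint sign_seqs n : seq (seq int) :=
  if n is n'.+1 then [seq s :: ts | s <- signs, ts <- sign_seqs n'] else [:: [::]].

Lemma mem_sign_seqs ts : all (mem signs) ts -> ts \in sign_seqs (size ts).
Proof.
elim: ts => [|s ts IHts /andP [s_sign /IHts ts_in]] //.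
by apply/allpairsP; exists (s, ts).
Qed.

Definition hperm_row (h : hperm) i c := hperm_sgn h i * d0 (hperm_idx h i) c.

(* Rows 0, 1, 2 of [D0] are the unit vectors, so [h] maps [L] into itself iff
   row [i] of [h D0] is the combination, with coefficients row [i] of [D0], of
   its rows 0, 1, 2; rows [i >= 6] all coincide with row 6. *)
Definition preserves_L (h : hperm) :=
  all (fun i => all (fun c => hperm_row h i c ==
     d0 i 0 * hperm_row h 0 c + d0 i 1 * hperm_row h 1 c + d0 i 2 * hperm_row h 2 c)
  (iota 0 3)) (iota 0 7).

(* [if] rather than [==>]: under call-by-value evaluation the word search then
   only runs on the sixteen candidates that preserve [L]. *)
Lemma preserves_L_generated :
  all (fun a => all (fun ts =>
    if preserves_L (a, ts) then has (fun w => eval_word w == (a, ts)) (gen_words 3)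
    else true) (sign_seqs 7)) (permutations (iota 0 6)).
Proof. by vm_compute. Qed.

Section TailPreservingMonomial.

Variables (l : nat) (g : 'I_(6 + l) -> 'I_(6 + l)) (t : 'I_(6 + l) -> int).
Hypotheses (l_gt0 : (0 < l)%N) (g_inj : injective g)
  (g_tail : forall i : 'I_(6 + l), (6 <= i)%N -> (6 <= g i)%N)
  (t_tail : forall i : 'I_(6 + l), (6 <= i)%N -> t i = t (inord 6)).

Let g_head : forall i : 'I_(6 + l), (i < 6)%N -> (g i < 6)%N :=
  inj_ord_below g_inj g_tail.

Definition hperm_of : hperm :=
  ([seq val (g (inord i)) | i <- iota 0 6], [seq t (inord i) | i <- iota 0 7]).

Lemma hperm_of_idx (i : 'I_(6 + l)) : (i < 6)%N -> hperm_idx hperm_of i = g i.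
Proof.
by move=> hi; rewrite /hperm_idx hi (nth_map 0%N) ?size_iota // nth_iota // inord_val.
Qed.

Lemma hperm_of_sgn (i : 'I_(6 + l)) : hperm_sgn hperm_of i = t i.
Proof.
rewrite /hperm_sgn (nth_map 0%N) ?size_iota; last lia.
rewrite nth_iota; last lia.
by rewrite add0n; case: (ltnP i 6) => hi; rewrite ?inord_val ?(t_tail hi).
Qed.

Lemma hperm_of_valid : hperm_valid hperm_of.
Proof.
apply/andP; split; first by rewrite size_map size_iota.
apply/allP => x /mapP [k]; rewrite mem_iota => /andP [_ hk] ->.
by apply: g_head; rewrite inordK; lia.
Qed.

Lemma hperm_of_perm : hperm_of.1 \in permutations (iota 0 6).
Proof.
have a_uniq : uniq hperm_of.1.
  rewrite map_inj_in_uniq ?iota_uniq // => x y; rewrite !mem_iota => hx hy.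
  move/val_inj/g_inj/(congr1 (@nat_of_ord _)); rewrite !inordK; lia.
have a_sub : {subset hperm_of.1 <= iota 0 6}.
  move=> x x_in; rewrite mem_iota /=.
  by have /andP [_ /allP /(_ x x_in)] := hperm_of_valid.
have size_a : (size (iota 0 6) <= size hperm_of.1)%N by rewrite size_map.
have [_ a_eq] := uniq_min_size a_uniq a_sub size_a.
by rewrite mem_permutations uniq_perm ?iota_uniq.
Qed.

Lemma hperm_of_signs : (forall i, t i \in signs) -> hperm_of.2 \in sign_seqs 7.
Proof.
move=> t_sign; have := @mem_sign_seqs hperm_of.2; rewrite size_map size_iota; apply.
by apply/allP => x /mapP [k _ ->]; apply: t_sign.
Qed.

Lemma hperm_of_row i c : (i <= 6)%N ->
  hperm_row hperm_of i c = t (inord i) * d0 (g (inord i)) c.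
Proof.
move=> hi; have inord_iK : (inord i : 'I_(6 + l)) = i :> nat by rewrite inordK; lia.
rewrite /hperm_row -[in LHS]inord_iK hperm_of_sgn inord_iK.
case: (ltnP i 6) => [i_lt6|i_ge6].
  by rewrite -[in LHS]inord_iK hperm_of_idx ?inord_iK.
have i6 : i = 6%N by lia.
by rewrite /hperm_idx ltnNge i_ge6 /= (d0_tail _ (g_tail _)) ?inord_iK ?i6.
Qed.

Lemma hperm_of_preserves_L :
  (forall (i : 'I_(6 + l)) (c : 'I_3),
     t i * d0 (g i) c = \sum_(k < 3) d0 i k * (t (inord k) * d0 (g (inord k)) c)) ->
  preserves_L hperm_of.
Proof.
move=> rows; apply/allP => i; rewrite mem_iota => /andP [_ hi].
apply/allP => c; rewrite mem_iota => /andP [_ hc].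
rewrite !hperm_of_row //; try lia.
have := rows (inord i) (inord c); rewrite !big_ord_recl big_ord0 addr0 /= !inordK //; try lia.
by move=> ->; rewrite addrA.
Qed.

Lemma monomial_mx_allowed :
  in_gen_group (hperm_mx l hperm_of) -> in_allowed_group (monomial_mx g t).
Proof.
move=> W_gen.
pose s (k : 'I_(6 + l)) := if (k < 6)%N then k else g k.
have s_inj : injective s.
  move=> x y; rewrite /s; case: ifP => hx; case: ifP => hy // e; last exact: g_inj.
    have y_tail : (6 <= y)%N by rewrite leqNgt hy.
    by move: (g_tail y_tail); rewrite -e leqNgt hx.
  have x_tail : (6 <= x)%N by rewrite leqNgt hx.
  by move: (g_tail x_tail); rewrite e leqNgt hy.
exists (hperm_mx l hperm_of), (perm s_inj); split=> //; split.
  by move=> i hi; rewrite permE /s hi.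
rewrite perm_mx_monomial monomial_mxM; apply: eq_monomial_mx => i /=.
  have idx_i : inord (hperm_idx hperm_of i) = if (i < 6)%N then g i else i.
    case: ifP => hi; first by rewrite hperm_of_idx // inord_val.
    by rewrite /hperm_idx hi inord_val.
  rewrite permE idx_i /s; case hi : (i < 6)%N => /=; first by rewrite (g_head hi).
  by rewrite hi.
by rewrite hperm_of_sgn mulr1.
Qed.

End TailPreservingMonomial.

Lemma isometry_preserving_L_allowed l (M : 'M[int]_(6 + l)) : (2 <= l)%N ->
  M^T *m M = 1%:M -> maps_L_onto_L M -> in_allowed_group M.
Proof.
move=> l_ge2 /int_orthogonal_monomial [g [t [g_inj t_sign ->]]] [L_stable _].
have [X MD] := col_span_stable_intertwined L_stable.
have rows i (c : 'I_3) : t i * d0 (g i) c =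
    \sum_(k < 3) d0 i k * (t (inord k) * d0 (g (inord k)) c).
  have := D0_intertwined_rows MD i c; rewrite mul_monomial_mx mxE => ->.
  by apply: eq_bigr => k _; rewrite mul_monomial_mx mxE.
have tail_rows (i j : 'I_(6 + l)) : (6 <= i)%N -> (6 <= j)%N ->
    forall c : 'I_3, t i * d0 (g i) c = t j * d0 (g j) c.
  move=> hi hj c; rewrite !rows.
  by apply: eq_bigr => k _; rewrite (d0_tail _ hi) (d0_tail _ hj).
have tail := D0_tail_preserved l_ge2 g_inj t_sign tail_rows.
have g_tail i hi : (6 <= g i)%N := (tail i hi).1.
have t_tail i hi : t i = t (inord 6) := (tail i hi).2.
have l_gt0 : (0 < l)%N by lia.
have := preserves_L_generated.
move=> /allP/(_ _ (hperm_of_perm t l_gt0 g_inj g_tail)).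
move=> /allP/(_ _ (hperm_of_signs g t_sign)).
rewrite -surjective_pairing (hperm_of_preserves_L l_gt0 g_tail t_tail rows).
case/hasP => w /gen_words_gens w_gen /eqP w_eq.
apply: (monomial_mx_allowed l_gt0 g_inj g_tail t_tail).
by rewrite -w_eq; apply: eval_word_gen_group.
Qed.

Theorem proposition5p1 (n : nat) (hn : (4 <= n)%N)
  (M : 'M[int]_(6 + (2 ^ (n - 2) - 1))) :
  M^T *m M = 1%:M ->
  maps_L_onto_L M ->
  in_allowed_group M.
Proof.
apply: isometry_preserving_L_allowed.
have -> : (n - 2 = (n - 4) + 2)%N by lia.
have pow_pos : (0 < 2 ^ (n - 4))%N by rewrite expn_gt0.
rewrite expnD; lia.
Qed.
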